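(* Let $\Sigma$ be an alphabet with $|\Sigma| \geq 3$ and let $n \geq 1$. If $g \colon \mathcal{T}(\Sigma)^n \to \mathcal{T}(\Sigma)$ is congruence preserving, then there exists a polynomial $P_g(x_1,\ldots,x_n)$ such that $g = \widetilde{P_g}$. In other words, the algebra $\langle \mathcal{T}(\Sigma), \star\rangle$ is affine complete.
   Context: Let $\Sigma$ be an alphabet not containing $0,1$. A binary tree over $\Sigma$ is a finite set $t \subseteq \{0,1\}^*\Sigma$ such that for any $ua, vb \in t$ with $ua \neq vb$, $u$ is not a prefix of $v$ and $v$ is not a prefix of $u$. $\mathcal{T}(\Sigma)$ denotes the set of all such trees. The empty tree is denoted $\mathbf{0}$, and each letter $a\in\Sigma$ is identified with the tree $\{a\}$. The binary operation is $t \star t' = 0.t \cup 1.t'$ (prefix every word of $t$ by $0$ and every word of $t'$ by $1$); in particular $\mathbf{0}\star\mathbf{0}=\mathbf{0}$. A congruence on $\langle \mathcal{T}(\Sigma),\star\rangle$ is an equivalence relation $\sim$ on $\mathcal{T}(\Sigma)$ such that $t_1\sim t_1'$ and $t_2 \sim t_2'$ imply $t_1\star t_2 \sim t_1'\star t_2'$. A function $f\colon \mathcal{T}(\Sigma)^n \to \mathcal{T}(\Sigma)$ is congruence preserving (CP) if for every congruence $\sim$ and all $t_1,\ldots,t_n,t_1',\ldots,t_n'$, $t_i\sim t_i'$ for all $i$ implies $f(t_1,\ldots,t_n)\sim f(t_1',\ldots,t_n')$. Let $x_1,\ldots,x_n \notin \Sigma$ be variables. A polynomial $P(x_1,\ldots,x_n)$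 is a tree over the alphabet $\Sigma\cup\{x_1,\ldots,x_n\}$. Its polynomial function $\widetilde P\colon \mathcal{T}(\Sigma)^n\to\mathcal{T}(\Sigma)$ is defined, for $\vec u=\langle t_1,\ldots,t_n\rangle$, by $\widetilde P(\vec u)=P$ if $P=\mathbf 0$ or $P\in\Sigma$; $\widetilde P(\vec u)=t_i$ if $P=x_i$; and $\widetilde P(\vec u)=\widetilde{P_1}(\vec u)\star\widetilde{P_2}(\vec u)$ if $P=P_1\star P_2$. *)

From HB Require Import structures.
From mathcomp Require Import all_boot.
From mathcomp Require Import finmap.

Set Implicit Arguments.
Unset Strict Implicit.
Unset Printing Implicit Defensive.

Local Open Scope fset_scope.

(* Words of {0,1}^* A are represented as pairs (u, a) : seq bool * A,
   with false standing for 0 and true for 1. *)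
Definition word (A : Type) := (seq bool * A)%type.

Definition is_tree (A : choiceType) (t : {fset word A}) : bool :=
  all (fun x => all (fun y => (x == y) ||
         (~~ prefix x.1 y.1 && ~~ prefix y.1 x.1)) (enum_fset t)) (enum_fset t).

Definition tree (A : choiceType) := {t : {fset word A} | is_tree t}.

Lemma is_tree0 (A : choiceType) : is_tree (fset0 : {fset word A}).
Proof. by []. Qed.

Definition tree0 (A : choiceType) : tree A := exist _ fset0 (is_tree0 A).

Definition lift (A : choiceType) (b : bool) (t : {fset word A}) : {fset word A} :=
  [fset ((b :: x.1), x.2) | x in t].

Definition fstar (A : choiceType) (t t' : {fset word A}) : {fset word A} :=
  lift false t `|` lift true t'.

(* The operation on trees.  Since t * t' is always a tree when t, t' are,
   insubd never falls back on its default value. *)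
Definition star (A : choiceType) (t t' : tree A) : tree A :=
  insubd (tree0 A) (fstar (val t) (val t')).

Definition congruence (A : choiceType) (r : tree A -> tree A -> Prop) : Prop :=
  [/\ (forall t, r t t),
      (forall t t', r t t' -> r t' t),
      (forall t1 t2 t3, r t1 t2 -> r t2 t3 -> r t1 t3) &
      (forall t1 t1' t2 t2', r t1 t1' -> r t2 t2' -> r (star t1 t2) (star t1' t2'))].

Definition congruence_preserving (A : choiceType) (n : nat)
    (f : n.-tuple (tree A) -> tree A) : Prop :=
  forall r : tree A -> tree A -> Prop, congruence r ->
  forall ts ts' : n.-tuple (tree A),
    (forall i : 'I_n, r (tnth ts i) (tnth ts' i)) -> r (f ts) (f ts').

(* Decomposition of a (raw) tree P = P1 * P2 : half b P is the subtree Pb,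
   i.e. the words of P starting with b, with that first letter removed. *)
Definition half (B : choiceType) (b : bool) (P : {fset word B}) : {fset word B} :=
  [fset (behead x.1, x.2) | x in P & ohead x.1 == Some b].

(* Polynomials in x_1..x_n are trees over the alphabet A + 'I_n
   (inr i is the variable x_(i+1)).
   The natural number k is fuel (depth bound). *)
Fixpoint evalF (A : choiceType) (n : nat) (k : nat) (ts : n.-tuple (tree A))
    (P : {fset word (A + 'I_n)%type}) : {fset word A} :=
  match k with
  | 0 => fset0
  | k'.+1 =>
    if P == fset0 then fset0 else
    match [seq x.2 | x <- enum_fset P & x.1 == [::]] with
    | c :: _ =>
        match c with
        | inl a => [fset (([::] : seq bool), a)]
        | inr i => val (tnth ts i)
        end
    | [::] => fstar (evalF k' ts (half false P)) (evalF k' ts (half true P))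
    end
  end.

Definition depth (B : choiceType) (P : {fset word B}) : nat :=
  \max_(x <- enum_fset P) size x.1.

(* The polynomial function P~ : T(A)^n -> T(A).  Its value is always a
   tree, so insubd never falls back on its default value. *)
Definition poly_fun (A : choiceType) (n : nat) (P : tree (A + 'I_n)%type)
    (ts : n.-tuple (tree A)) : tree A :=
  insubd (tree0 A) (evalF (depth (val P)).+1 ts (val P)).

From Pilot Require Import Defs.
From mathcomp Require Import all_boot.
From mathcomp Require Import finmap.

Set Implicit Arguments.
Unset Strict Implicit.
Unset Printing Implicit Defensive.

Local Open Scope fset_scope.

(* A congruence-preserving [g] commutes with every substitution of trees for
   letters, because the kernel of such a substitution is a congruence.
   Substituting away all letters but [d] shows that the [d]-leaves of [g ts]
   depend only on the [d]-leaves of the arguments; putting a leaf [c] at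
   position [i] and then grafting [ts_i] on the [c]-leaves peels off the
   arguments one at a time.  Hence a [d]-leaf of [g ts] is either a leaf of
   [g 0] or [x ++ y], where [y] is a [d]-leaf of [ts_i] and [x] is a fresh word
   of [i]: a leaf of [g] applied to a single leaf at position [i] that is not
   a leaf of [g 0].  Fresh words do not depend on the letter, and two distinct
   letters make fresh words of different positions prefix-incomparable, so [g]
   is the polynomial function of the tree carrying the leaves of [g 0] and the
   variable [x_i] at each fresh word of [i]. *)

Lemma cat_prefix_total (T : eqType) (s1 s2 s3 s4 : seq T) :
  s1 ++ s2 = s3 ++ s4 -> prefix s1 s3 || prefix s3 s1.
Proof.
elim: s1 s3 => [|x s1 IH] [|y s3] //= [-> /IH].
by rewrite eqxx.
Qed.

Section Trees.
Variable A : choiceType.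
Implicit Types (t X Y : {fset word A}) (x y : word A) (c : A).

Lemma is_treeP t :
  reflect {in t &, forall x y, prefix x.1 y.1 -> x = y} (is_tree t).
Proof.
apply: (iffP allP) => [H x y xt yt pxy | H x xt].
  have /allP/(_ y yt) := H x xt.
  by case/orP=> [/eqP // | /andP[/negP]].
apply/allP => y yt; case: eqP => //= /eqP nxy.
apply/andP; split; apply/negP; [move/(H _ _ xt yt) | move/(H _ _ yt xt)];
  by move=> exy; rewrite exy eqxx in nxy.
Qed.

Lemma tree_prefix_eq t x y :
  is_tree t -> x \in t -> y \in t -> prefix x.1 y.1 -> x = y.
Proof. by move=> /is_treeP; apply. Qed.

Lemma tree_cat_eq t x y s s' :
  is_tree t -> x \in t -> y \in t -> x.1 ++ s = y.1 ++ s' -> x = y.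
Proof.
move=> tt xt yt /cat_prefix_total /orP[] pxy; first exact: tree_prefix_eq tt xt yt pxy.
exact/esym/(tree_prefix_eq tt yt xt pxy).
Qed.

Lemma tree_label_eq t w s c d :
  is_tree t -> (w, c) \in t -> (w ++ s, d) \in t -> c = d.
Proof. by move=> tt wt wst; case: (tree_cat_eq tt wt wst (esym (cats0 (w ++ s)))). Qed.

Lemma in_lift b t x :
  (x \in Defs.lift b t) = (ohead x.1 == Some b) && ((behead x.1, x.2) \in t).
Proof.
apply/imfsetP/andP => [[y yt ->] | [/eqP hx xt]] /=.
  by rewrite eqxx; case: y yt.
exists (behead x.1, x.2) => //.
by case: x hx xt => [[|b' w] c] //= [->].
Qed.

Lemma in_fstar X Y x :
  (x \in fstar X Y) = if x.1 is b :: w then (w, x.2) \in (if b then Y else X) else false.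
Proof. by rewrite in_fsetU !in_lift; case: x => [[|[] w] c] //=; rewrite ?orbF. Qed.

Lemma in_half b t x : (x \in Defs.half b t) = ((b :: x.1, x.2) \in t).
Proof.
apply/imfsetP/idP => /= [[y] | xt].
  by rewrite inE => /andP[+ /eqP]; case: y => [[|b' w] c] //= yt [<-] ->.
exists (b :: x.1, x.2); last by rewrite /= -surjective_pairing.
by rewrite inE xt /= eqxx.
Qed.

Lemma fstar_tree X Y : is_tree X -> is_tree Y -> is_tree (fstar X Y).
Proof.
move=> tX tY; apply/is_treeP => -[[|b w] c] [[|b' w'] d]; rewrite !in_fstar //=.
move=> xt yt /andP[/eqP eb pww]; subst b'.
have tXY : is_tree (if b then Y else X) by case: b xt yt.
by case: (tree_prefix_eq tXY xt yt pww) => -> ->.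
Qed.

Lemma half_tree b t : is_tree t -> is_tree (Defs.half b t).
Proof.
move=> /is_treeP tt; apply/is_treeP => -[w c] [w' d]; rewrite !in_half /= => xt yt pww.
by have /= := tt _ _ xt yt; rewrite eqxx pww => /(_ isT) [-> ->].
Qed.

Lemma fstar_half t :
  {in t, forall x, x.1 != [::]} -> t = fstar (Defs.half false t) (Defs.half true t).
Proof.
move=> nroot; apply/fsetP => -[w c]; rewrite in_fstar.
case: w => [|[] w] /=; rewrite ?in_half //.
by apply/negP => /nroot.
Qed.

Definition sing c : {fset word A} := [fset ([::], c)].

Lemma in_sing c x : (x \in sing c) = (x == ([::], c)).
Proof. exact: in_fset1. Qed.

Lemma sing_tree c : is_tree (sing c).
Proof. by apply/is_treeP => x y; rewrite !in_sing => /eqP -> /eqP ->. Qed.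

Lemma tree_root t c : is_tree t -> ([::], c) \in t -> t = sing c.
Proof.
move=> tt ct; apply/fsetP => x; rewrite in_sing.
apply/idP/eqP => [xt | ->] //.
by apply/esym/(tree_cat_eq (s := x.1) (s' := [::]) tt ct xt); rewrite cats0.
Qed.

Definition tree_of t : tree A := insubd (tree0 A) t.

Lemma val_tree_of t : is_tree t -> val (tree_of t) = t.
Proof. exact: insubdK. Qed.

Lemma val_star (u v : tree A) : val (star u v) = fstar (val u) (val v).
Proof. by rewrite /star insubdK //; apply: fstar_tree; apply: valP. Qed.

End Trees.

Section Substitution.
Variables (A B : choiceType) (phi : A -> {fset word B}).
Implicit Types (t X Y : {fset word A}).

Definition subst t : {fset word B} := [fset (x.1 ++ y.1, y.2) | x in t, y in phi x.2].

Lemma in_substP t w :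
  reflect (exists x y, [/\ x \in t, y \in phi x.2 & w = (x.1 ++ y.1, y.2)])
          (w \in subst t).
Proof.
apply: (iffP idP) => [/imfset2P [x xt [y yx ->]] | [x [y [xt yx ->]]]].
  by exists x, y.
by apply/imfset2P; exists x => //; exists y.
Qed.

Lemma subst0 : subst fset0 = fset0.
Proof. by apply/fsetP => w; rewrite in_fset0; apply/in_substP => -[x [y []]]. Qed.

Lemma subst_sing c : subst (sing c) = phi c.
Proof.
apply/fsetP => w; apply/in_substP/idP => [[x [y [+ + ->]]] | wc].
  by rewrite in_sing => /eqP -> yc; rewrite -surjective_pairing.
by exists ([::], c), w; rewrite in_sing -surjective_pairing.
Qed.

Lemma subst_fstar X Y : subst (fstar X Y) = fstar (subst X) (subst Y).
Proof.
apply/fsetP => w; apply/in_substP/idP.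
  move=> [[[|b u] c] [y [+ yc ->]]]; rewrite in_fstar //= => xt.
  by rewrite in_fstar; case: b xt yc => xt yc; apply/in_substP; exists (u, c), y.
rewrite in_fstar; case: w => [[|b u] c] //= wXY.
have /in_substP [x [y [xt yx [-> ->]]]] : (u, c) \in subst (if b then Y else X).
  by case: b wXY.
by exists (b :: x.1, x.2), y; rewrite in_fstar /= -surjective_pairing.
Qed.

Lemma subst_tree t : is_tree t -> (forall c, is_tree (phi c)) -> is_tree (subst t).
Proof.
move=> tt tphi; apply/is_treeP => w1 w2.
move=> /in_substP [x1 [y1 [x1t y1x ->]]] /in_substP [x2 [y2 [x2t y2x ->]]] /=.
move=> /prefixP [s]; rewrite -catA => eqw.
have ex := tree_cat_eq tt x1t x2t (esym eqw); subst x2.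
move/eqP: eqw; rewrite eqseq_cat // => /andP[_ /eqP eqy].
by rewrite (tree_prefix_eq (tphi _) y1x y2x) // eqy prefix_prefix.
Qed.

End Substitution.

Lemma kernel_congruence (A : choiceType) (T : Type) (h : {fset word A} -> T) :
  (forall X X' Y Y', h X = h X' -> h Y = h Y' -> h (fstar X Y) = h (fstar X' Y')) ->
  congruence (fun t t' : tree A => h (val t) = h (val t')).
Proof.
move=> hstar; split => // [t1 t2 t3 -> // | t1 t1' t2 t2' e1 e2].
by rewrite !val_star; apply: hstar.
Qed.

Lemma subst_congruence (A B : choiceType) (phi : A -> {fset word B}) :
  congruence (fun t t' : tree A => subst phi (val t) = subst phi (val t')).
Proof. by apply: kernel_congruence => X X' Y Y'; rewrite !subst_fstar => -> ->. Qed.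

Lemma depth_leP (B : choiceType) (t : {fset word B}) m :
  reflect {in t, forall x, size x.1 <= m} (depth t <= m).
Proof.
apply: (iffP (bigmax_leqP_seq _ _ _ _)) => H x xt; first exact: H.
by move=> _; apply: H.
Qed.

Lemma size_le_depth (B : choiceType) (t : {fset word B}) x : x \in t -> size x.1 <= depth t.
Proof. by move: x; apply/depth_leP. Qed.

Lemma depth_half (B : choiceType) b (t : {fset word B}) :
  t != fset0 -> {in t, forall x, x.1 != [::]} -> depth (Defs.half b t) < depth t.
Proof.
move=> /fset0Pn [x xt] nroot.
have dt_gt0 : 0 < depth t.
  by apply: leq_trans (size_le_depth xt); rewrite lt0n size_eq0 nroot.
rewrite -(prednK dt_gt0) ltnS; apply/depth_leP => y.
by rewrite in_half => /size_le_depth /= y_lt; rewrite -ltnS prednK.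
Qed.

Section Evaluation.
Variables (S : choiceType) (n : nat) (ts : n.-tuple (tree S)).

Definition assign (v : S + 'I_n) : {fset word S} :=
  match v with inl c => sing c | inr i => val (tnth ts i) end.

Lemma evalF_subst k (P : {fset word (S + 'I_n)%type}) :
  is_tree P -> depth P < k -> evalF k ts P = subst assign P.
Proof.
elim: k P => [//|k IH] P tP dP /=.
case: eqP => [-> | /eqP P0]; first by rewrite subst0.
case roots: [seq x.2 | x <- enum_fset P & x.1 == [::]] => [|v l].
  have nroot : {in P, forall x, x.1 != [::]}.
    move=> x xP; apply: contraT => /negPn x_root.
    have : x.2 \in [seq x.2 | x <- enum_fset P & x.1 == [::]].
      by apply: map_f; rewrite mem_filter x_root.
    by rewrite roots.
  have dhalf b : depth (Defs.half b P) < k.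
    by apply: leq_trans (depth_half b P0 nroot) _.
  by rewrite [in RHS](fstar_half nroot) subst_fstar !IH // half_tree.
have : v \in [seq x.2 | x <- enum_fset P & x.1 == [::]] by rewrite roots mem_head.
case/mapP => -[w c]; rewrite mem_filter /= => /andP[/eqP -> vP ->].
by rewrite (tree_root tP vP) subst_sing; case: c {vP}.
Qed.

Lemma poly_funE (P : tree (S + 'I_n)%type) : val (poly_fun P ts) = subst assign (val P).
Proof.
rewrite /poly_fun evalF_subst ?insubdK //; last exact: valP.
apply: subst_tree; first exact: valP.
by case=> [c | i]; [exact: sing_tree | exact: valP].
Qed.

End Evaluation.

Section Relabelling.
Variable S : choiceType.
Implicit Types (X s : {fset word S}) (c d e : S).

Definition restrict c d : {fset word S} := if d == c then sing d else fset0.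

Definition graft c s d : {fset word S} := if d == c then s else sing d.

Lemma restrict_tree c d : is_tree (restrict c d).
Proof. by rewrite /restrict; case: eqP => _; [exact: sing_tree | exact: is_tree0]. Qed.

Lemma graft_tree c s d : is_tree s -> is_tree (graft c s d).
Proof. by move=> ts; rewrite /graft; case: eqP => // _; exact: sing_tree. Qed.

Lemma in_subst_restrict c X w : (w \in subst (restrict c) X) = (w \in X) && (w.2 == c).
Proof.
case: w => u e /=; apply/in_substP/andP => [[[v e'] [y [vX]]] | [uX /eqP <-]].
  rewrite /restrict; case: eqP => [<- | _]; last by rewrite in_fset0.
  by rewrite in_sing => /eqP -> /= [-> ->]; rewrite cats0 eqxx.
by exists (u, e), ([::], e); rewrite /restrict /= eqxx in_sing cats0 eqxx.
Qed.

Lemma subst_restrict_eq0 c X : {in X, forall x, x.2 != c} -> subst (restrict c) X = fset0.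
Proof.
move=> Xc; apply/fsetP => w; rewrite in_subst_restrict in_fset0.
by apply/andP => -[/Xc/negbTE ->].
Qed.

Lemma subst_restrictK c X : subst (restrict c) (subst (restrict c) X) = subst (restrict c) X.
Proof. by apply/fsetP => w; rewrite !in_subst_restrict -andbA andbb. Qed.

Lemma in_subst_graft c s X w : w \in subst (graft c s) X <->
  (w \in X /\ w.2 != c) \/ exists x y, [/\ (x, c) \in X, (y, w.2) \in s & w.1 = x ++ y].
Proof.
split.
  move=> /in_substP [x [y [xX]]]; rewrite /graft; case: eqP => [xc | /eqP xc].
    by move=> ys ->; right; exists x.1, y.1; rewrite -xc -!surjective_pairing.
  by rewrite in_sing => /eqP -> ->; left; rewrite cats0 -surjective_pairing.
case=> [[wX wc] | [x [y [xX ys wxy]]]]; apply/in_substP.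
  exists w, ([::], w.2); rewrite /graft (negbTE wc) in_sing.
  by rewrite cats0 -surjective_pairing.
exists (x, c), (y, w.2); rewrite /graft eqxx.
by rewrite -wxy -surjective_pairing.
Qed.

Lemma in_subst_graft_label c d s X w : c != d ->
  (w, d) \in subst (graft c s) X <->
  (w, d) \in X \/ exists x y, [/\ (x, c) \in X, (y, d) \in s & w = x ++ y].
Proof.
move=> cd; rewrite in_subst_graft /=; split.
  by case=> [[wX _] | ?]; [left | right].
by case=> [wX | ?]; [left; rewrite eq_sym | right].
Qed.

Lemma subst_graft_id c s X : {in X, forall x, x.2 != c} -> subst (graft c s) X = X.
Proof.
move=> Xc; apply/fsetP => w; apply/idP/idP => [| wX].
  by case/in_subst_graft => [[] // | [x [y [/Xc]]]]; rewrite eqxx.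
by apply/in_subst_graft; left; split => //; apply: Xc.
Qed.

Lemma in_subst_merge d e X w : e != d ->
  ((w, e) \in subst (graft d (sing e)) X) = ((w, e) \in X) || ((w, d) \in X).
Proof.
move=> ed; apply/idP/orP.
  case/in_subst_graft => [[] | [x [y [xX]]]]; first by left.
  by rewrite in_sing => /eqP [->] /= ->; rewrite cats0; right.
case=> [wX | wX]; apply/in_subst_graft; first by left.
by right; exists w, [::]; rewrite in_sing cats0.
Qed.

End Relabelling.

Section CongruencePreserving.
Variables (S : choiceType) (n : nat) (g : n.-tuple (tree S) -> tree S).
Hypothesis gP : congruence_preserving g.
Variables (a b : S).
Hypothesis ab : a != b.
Implicit Types (X : {fset word S}) (u v ts : n.-tuple (tree S)) (c d e : S) (i j : 'I_n).

Local Notation G ts := (val (g ts)).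

Definition leaf c : tree S := tree_of (sing c).

Lemma val_leaf c : val (leaf c) = sing c.
Proof. exact/val_tree_of/sing_tree. Qed.

Definition tuple0 : n.-tuple (tree S) := [tuple tree0 S | _ < n].

Local Notation G0 := (G tuple0).

Definition upd u i t : n.-tuple (tree S) := [tuple if j == i then t else tnth u j | j < n].

Definition unit_at i c := upd tuple0 i (leaf c).

Lemma tnth_upd u i t j : tnth (upd u i t) j = if j == i then t else tnth u j.
Proof. exact: tnth_mktuple. Qed.

Lemma tnth_tuple0 j : tnth tuple0 j = tree0 S.
Proof. exact: tnth_mktuple. Qed.

Definition labelled d X := {in X, forall x, x.2 = d}.

Definition labelled_tuple d u := forall i, labelled d (val (tnth u i)).

Lemma upd0_labelled d u i : labelled_tuple d u -> labelled_tuple d (upd u i (tree0 S)).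
Proof. by move=> ud j x; rewrite tnth_upd; case: eqP => _; [rewrite in_fset0 | apply: ud]. Qed.

Lemma unit_at_labelled i c : labelled_tuple c (unit_at i c).
Proof.
move=> j x; rewrite tnth_upd; case: eqP => _; last by rewrite tnth_tuple0 in_fset0.
by rewrite val_leaf in_sing => /eqP ->.
Qed.

Lemma g_subst (phi : S -> {fset word S}) u v :
  (forall i, subst phi (val (tnth u i)) = subst phi (val (tnth v i))) ->
  subst phi (G u) = subst phi (G v).
Proof. exact: gP (subst_congruence phi) u v. Qed.

Lemma g_leaves_eq c u v w :
  (forall i, subst (restrict c) (val (tnth u i)) = subst (restrict c) (val (tnth v i))) ->
  ((w, c) \in G u) = ((w, c) \in G v).
Proof. by move/g_subst/fsetP/(_ (w, c)); rewrite !in_subst_restrict eqxx !andbT. Qed.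

Lemma g_other_label u c d w :
  labelled_tuple d u -> c != d -> ((w, c) \in G u) = ((w, c) \in G0).
Proof.
move=> ud cd; apply: g_leaves_eq => i; rewrite tnth_tuple0 subst0 subst_restrict_eq0 //.
by move=> x /ud ->; rewrite eq_sym.
Qed.

Definition other d := if d == a then b else a.

Lemma other_neq d : other d != d.
Proof. by rewrite /other; case: (d =P a) => [-> | /eqP]; rewrite // eq_sym. Qed.

(* Relabel [d] as [e]: [(w, d)] is a leaf of [G u'] for the relabelled tuple
   [u'], so [(w, e)] is a leaf of the relabelled [G u]; it cannot come from an
   [e]-leaf of [G u], as those are the [e]-leaves of [G0]. *)
Lemma G0_label_sub u d w : labelled_tuple d u -> (w, d) \in G0 -> (w, d) \in G u.
Proof.
move=> ud wG0; set e := other d; have ed : e != d := other_neq d.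
set phi := graft d (sing e).
have phi_tree c : is_tree (phi c) by apply/graft_tree/sing_tree.
set u' := [tuple tree_of (subst phi (val (tnth u j))) | j < n].
have val_u' j : val (tnth u' j) = subst phi (val (tnth u j)).
  by rewrite tnth_mktuple val_tree_of //; apply: subst_tree => //; apply: valP.
have u'e : labelled_tuple e u'.
  move=> j x; rewrite val_u' => /in_subst_graft [[/ud -> /negP] // | [? [? [_]]]].
  by rewrite in_sing => /eqP [].
have : subst phi (G u) = subst phi (G u').
  apply: g_subst => j; rewrite val_u' [RHS]subst_graft_id // -val_u'.
  by move=> x /u'e ->.
move/fsetP/(_ (w, e)); rewrite !in_subst_merge // (g_other_label (c := d) _ u'e) 1?eq_sym //.
rewrite wG0 orbT (g_other_label _ ud ed) => /orP[] // weG0.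
have := tree_label_eq (s := [::]) (valP (g tuple0)) weG0.
by rewrite cats0 => /(_ _ wG0) ede; rewrite ede eqxx in ed.
Qed.

Lemma G0_sub u d w c : labelled_tuple d u -> (w, c) \in G0 -> (w, c) \in G u.
Proof.
move=> ud; case: (c =P d) => [-> | /eqP cd]; first exact: G0_label_sub.
by rewrite (g_other_label _ ud cd).
Qed.

Definition fresh c i x := (x, c) \in G (unit_at i c) /\ (x, c) \notin G0.

Lemma g_graft_leaf u d c i : labelled_tuple d u -> c != d ->
  let phi := graft c (val (tnth u i)) in
  subst phi (G (upd u i (leaf c))) = subst phi (G u).
Proof.
move=> ud cd phi; apply: g_subst => j; rewrite tnth_upd; case: eqP => [-> | _] //.
rewrite val_leaf subst_sing subst_graft_id => [|x /ud ->]; last by rewrite eq_sym.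
by rewrite /phi /graft eqxx.
Qed.

(* Graft [u_i] on the [c]-leaves of [G (upd u i (leaf c))] (see [g_graft_leaf]):
   these are the [c]-leaves of [G0] and the fresh words of [i]. *)
Lemma g_peel u d c i w : labelled_tuple d u -> c != d ->
  (w, d) \in G u <-> (w, d) \in G (upd u i (tree0 S)) \/
    exists x y, [/\ fresh c i x, (y, d) \in val (tnth u i) & w = x ++ y].
Proof.
move=> ud cd; set U := val (tnth u i); set u0 := upd u i (tree0 S).
set v := upd u i (leaf c); have dc : d != c by rewrite eq_sym.
have graftP X x := in_subst_graft_label U X x cd.
have v_d x : ((x, d) \in G v) = ((x, d) \in G u0).
  apply: g_leaves_eq => j; rewrite !tnth_upd; case: eqP => _ //.
  by rewrite val_leaf subst0 subst_restrict_eq0 // => y; rewrite in_sing => /eqP ->.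
have v_c x : ((x, c) \in G v) = ((x, c) \in G (unit_at i c)).
  apply: g_leaves_eq => j; rewrite !tnth_upd; case: eqP => _ //.
  by rewrite tnth_tuple0 subst0 subst_restrict_eq0 // => y /ud ->.
have u_c x : ((x, c) \in G u) = ((x, c) \in G0) := g_other_label x ud cd.
have u0_c x : ((x, c) \in G u0) = ((x, c) \in G0).
  exact: g_other_label x (upd0_labelled (i := i) ud) cd.
have graft_vu := g_graft_leaf i ud cd; rewrite -/U -/v in graft_vu.
split=> [wu | [wu0 | [x [y [[xc xG0] yU ->]]]]].
- have : (w, d) \in subst (graft c U) (G v) by rewrite graft_vu; apply/graftP; left.
  case/graftP => [wv | [x [y [xv yU ew]]]]; first by left; rewrite -v_d.
  right; exists x, y; split=> //; split; first by rewrite -v_c.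
  apply: contraL cd => xG0; rewrite -u_c in xG0; rewrite ew in wu.
  by rewrite (tree_label_eq (valP (g u)) xG0 wu) eqxx.
- have /graftP [// | [x [y [xu yU ew]]]] : (w, d) \in subst (graft c U) (G u).
    by rewrite -graft_vu; apply/graftP; left; rewrite v_d.
  rewrite u_c -u0_c in xu; rewrite ew in wu0.
  by case/eqP: cd; apply: tree_label_eq (valP _) xu wu0.
- have /graftP [// | [x' [y' [x'u y'U exy]]]] : (x ++ y, d) \in subst (graft c U) (G u).
    by rewrite -graft_vu; apply/graftP; right; exists x, y; rewrite v_c.
  rewrite u_c in x'u; have x'c := G0_sub (@unit_at_labelled i c) x'u.
  by case: (tree_cat_eq (valP _) xc x'c exy) => exx'; rewrite exx' x'u in xG0.
Qed.

Lemma fresh_relabel c c' i x : fresh c i x -> fresh c' i x.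
Proof.
case: (c' =P c) => [-> // | /eqP c'c] [xc xG0].
have unit0 : upd (unit_at i c) i (tree0 S) = tuple0.
  by apply: eq_from_tnth => j; rewrite !tnth_upd tnth_tuple0; case: eqP.
have := (g_peel i x (@unit_at_labelled i c) c'c).1 xc; rewrite unit0.
case=> [/(negP xG0) [] | [x' [y [fx' + ->]]]].
by rewrite /unit_at tnth_upd eqxx val_leaf in_sing => /eqP [->]; rewrite cats0.
Qed.

Lemma g_decomp_labelled d k u w : k <= n -> labelled_tuple d u ->
  (forall j, k <= j -> tnth u j = tree0 S) ->
  (w, d) \in G u <-> (w, d) \in G0 \/
    exists i x y, [/\ fresh a i x, (y, d) \in val (tnth u i) & w = x ++ y].
Proof.
elim: k u => [|k IH] u kn ud u_high.
  have -> : u = tuple0 by apply: eq_from_tnth => j; rewrite tnth_tuple0 u_high.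
  split=> [|[// | [i [x [y [_ + _]]]]]]; first by left.
  by rewrite tnth_tuple0 in_fset0.
set i := Ordinal kn; set u0 := upd u i (tree0 S).
have u0_high j : k <= j -> tnth u0 j = tree0 S.
  rewrite tnth_upd leq_eqVlt => /orP[/eqP kj | /u_high ->]; last by case: eqP.
  by rewrite (_ : j = i) ?eqxx //; apply: val_inj.
have peel := g_peel i w ud (other_neq d).
have IH0 := IH u0 (ltnW kn) (upd0_labelled ud) u0_high.
have peel_tuple : (exists j x y, [/\ fresh a j x, (y, d) \in val (tnth u j) & w = x ++ y]) <->
    (exists j x y, [/\ fresh a j x, (y, d) \in val (tnth u0 j) & w = x ++ y]) \/
    (exists x y, [/\ fresh (other d) i x, (y, d) \in val (tnth u i) & w = x ++ y]).
  split=> [[j [x [y [fx yu ew]]]] | [[j [x [y [fx + ew]]]] | [x [y [fx yu ew]]]]].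
  - case: (j =P i) => [eji | /eqP nji].
      by right; exists x, y; rewrite -eji; split=> //; apply: fresh_relabel fx.
    by left; exists j, x, y; rewrite tnth_upd (negbTE nji).
  - rewrite tnth_upd; case: eqP => [_ | _ yu]; first by rewrite in_fset0.
    by exists j, x, y.
  - by exists i, x, y; split=> //; apply: fresh_relabel fx.
tauto.
Qed.

Lemma g_decomp ts d w : (w, d) \in G ts <-> (w, d) \in G0 \/
  exists i x y, [/\ fresh a i x, (y, d) \in val (tnth ts i) & w = x ++ y].
Proof.
pose rts := [tuple tree_of (subst (restrict d) (val (tnth ts j))) | j < n].
have val_rts j : val (tnth rts j) = subst (restrict d) (val (tnth ts j)).
  by rewrite tnth_mktuple val_tree_of //; apply: subst_tree (valP _) (@restrict_tree _ d).
have rts_d : labelled_tuple d rts.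
  by move=> j x; rewrite val_rts in_subst_restrict => /andP[_ /eqP].
have in_rts j y : ((y, d) \in val (tnth rts j)) = ((y, d) \in val (tnth ts j)).
  by rewrite val_rts in_subst_restrict eqxx andbT.
have rts_high j : n <= j -> tnth rts j = tree0 S by rewrite leqNgt ltn_ord.
have -> : ((w, d) \in G ts) = ((w, d) \in G rts).
  by apply: g_leaves_eq => j; rewrite val_rts subst_restrictK.
have dec := g_decomp_labelled w (leqnn n) rts_d rts_high; split.
  case/dec => [? | [j [x [y [fx yr ew]]]]]; [by left | right].
  by exists j, x, y; rewrite -in_rts.
case=> [? | [j [x [y [fx yts ew]]]]]; apply/dec; [by left | right].
by exists j, x, y; rewrite in_rts.
Qed.

Definition fresh_words i : {fset seq bool} :=
  [fset x.1 | x in G (unit_at i a) & (x.2 == a) && (x \notin G0)].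

Lemma in_fresh_words i x : x \in fresh_words i <-> fresh a i x.
Proof.
split=> [/imfsetP [[y e] /andP[ye /andP[/eqP /= ea yG0]] ->] | [xa xG0]].
  by subst e.
by apply/imfsetP; exists (x, a); rewrite // inE xa eqxx xG0.
Qed.

Definition poly_g : {fset word (S + 'I_n)%type} :=
  [fset (x.1, inl x.2) | x in G0] `|`
  \bigcup_(i <- enum 'I_n) [fset (x, inr i) | x in fresh_words i].

Lemma in_poly_g_const x c : ((x, inl c) \in poly_g) = ((x, c) \in G0).
Proof.
apply/idP/idP => [| xG0].
  rewrite in_fsetU => /orP[/imfsetP [y yG0 [-> ->]] | /bigfcupP [i _ /imfsetP [? _ []]]] //.
  by rewrite -surjective_pairing.
by rewrite in_fsetU; apply/orP; left; apply/imfsetP; exists (x, c).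
Qed.

Lemma in_poly_g_var x i : (x, inr i) \in poly_g <-> fresh a i x.
Proof.
split.
  rewrite in_fsetU => /orP[/imfsetP [? _ []] // | /bigfcupP [j _ /imfsetP [y yx [-> ->]]]].
  exact/in_fresh_words.
move/in_fresh_words => xi; rewrite in_fsetU; apply/orP; right; apply/bigfcupP.
by exists i; [rewrite mem_enum | apply/imfsetP; exists x].
Qed.

Lemma fresh_G0_incomparable i x y c :
  fresh a i x -> (y, c) \in G0 -> ~~ prefix y x && ~~ prefix x y.
Proof.
move=> [xa xG0] yG0; have ya := G0_sub (@unit_at_labelled i a) yG0.
apply/andP; split; apply/negP => pre.
  by rewrite -(tree_prefix_eq (valP _) ya xa pre) yG0 in xG0.
by rewrite (tree_prefix_eq (valP _) xa ya pre) yG0 in xG0.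
Qed.

(* For [i1 != i2], putting [a] at [i1] and [b] at [i2] makes [x1] and [x2]
   leaves of a single tree, with different labels. *)
Lemma fresh_prefix_eq i1 i2 x1 x2 :
  fresh a i1 x1 -> fresh a i2 x2 -> prefix x1 x2 -> i1 = i2 /\ x1 = x2.
Proof.
move=> f1 f2 pre; case: (i1 =P i2) => [ei | /eqP ni].
  by subst i2; case: (tree_prefix_eq (valP _) (proj1 f1) (proj1 f2) pre).
pose ts := upd (unit_at i1 a) i2 (leaf b).
have x1ts : (x1, a) \in G ts.
  apply/g_decomp; right; exists i1, x1, [::]; rewrite cats0 /ts tnth_upd (negbTE ni).
  by rewrite /unit_at tnth_upd eqxx val_leaf in_sing.
have x2ts : (x2, b) \in G ts.
  apply/g_decomp; right; exists i2, x2, [::]; rewrite cats0 /ts tnth_upd eqxx val_leaf in_sing.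
  by split=> //; apply: fresh_relabel f2.
by case: (tree_prefix_eq (valP _) x1ts x2ts pre) => _ eab; move: ab; rewrite eab eqxx.
Qed.

Lemma poly_g_tree : is_tree poly_g.
Proof.
apply/is_treeP => -[x1 [c1 | i1]] [x2 [c2 | i2]] /=.
- by rewrite !in_poly_g_const => p1 p2 /(tree_prefix_eq (valP _) p1 p2) [-> ->].
- by rewrite in_poly_g_const => p1 /in_poly_g_var/fresh_G0_incomparable/(_ p1)/andP[/negP].
- by rewrite in_poly_g_const => /in_poly_g_var/fresh_G0_incomparable p1 /p1/andP[_ /negP].
- by move=> /in_poly_g_var p1 /in_poly_g_var p2 /(fresh_prefix_eq p1 p2) [-> ->].
Qed.

Lemma g_subst_poly ts : G ts = subst (assign ts) poly_g.
Proof.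
apply/fsetP => -[w d]; apply/idP/in_substP.
  case/g_decomp=> [wG0 | [i [x [y [fx yts ->]]]]].
    by exists (w, inl d), ([::], d); rewrite in_poly_g_const in_sing cats0.
  by exists (x, inr i), (y, d); split=> //; apply/in_poly_g_var.
move=> [[x [c | i]] [y [+ + [-> ->]]]] /=.
  by rewrite in_poly_g_const in_sing => xG0 /eqP ->; apply/g_decomp; left; rewrite cats0.
move=> /in_poly_g_var fx yts; apply/g_decomp; right.
by exists i, x, y.1; rewrite -surjective_pairing.
Qed.

Lemma cp_polynomial : exists P : tree (S + 'I_n)%type, forall ts, g ts = poly_fun P ts.
Proof.
exists (tree_of poly_g) => ts; apply: val_inj.
by rewrite poly_funE val_tree_of ?g_subst_poly //; apply: poly_g_tree.
Qed.

End CongruencePreserving.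

Theorem mainTheorem1 (S : choiceType) (n : nat)
    (HS : exists a b c : S, [/\ a != b, b != c & a != c])
    (Hn : 0 < n)
    (g : n.-tuple (tree S) -> tree S) :
  congruence_preserving g ->
  exists P : tree (S + 'I_n)%type, forall ts : n.-tuple (tree S), g ts = poly_fun P ts.
Proof.
(* Two distinct letters suffice, and the argument also covers [n = 0]. *)
move=> gP; case: HS => a [b [_ [ab _ _]]].
exact (cp_polynomial gP ab).
Qed.
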